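(* Let $\langle t,p\rangle$ be a TTP solution, $0<b<e<n$, and $t'=\mathrm{2OPT}(t,b,e)$. Suppose the sequences $\Pi(L(t,p))$ and $\Omega(H(t,p))$, the total weight $W(p)$, and the values $w_{t,p}(k)$, $\tau_{t,p}(k)$ for all positions $k$ are available. Let $p'$ be obtained from $p$ by the following procedure: first, for $k=b,\dots,e$ and each $i\in I(t'_k)$ with $p_i=1$ and $r_i<\Pi(L(t,p),k)$, set the entry of item $i$ to $0$; then, for $k=e,e-1,\dots,b$ and each $i\in I(t'_k)$ whose current entry is $0$ and with $r_i>\Omega(H(t,p),k)$, set the entry of item $i$ to $1$ provided the resulting plan still satisfies the knapsack constraint. Then computing $p'$ and then $N(t',p')$ takes $O\big(n-b+|I(t'[b,e])|\big)$ time in total, where $I(t'[b,e])=\bigcup_{k=b}^{e}I(t'_k)$.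
   Context: TTP setup. Cities $C=\{1,\dots,n\}$, $n>1$, symmetric distances $d(c,c')\ge0$. A cyclic tour is $t=\langle t_0,\dots,t_n\rangle$ with $t_0=t_n=1$ and $(t_1,\dots,t_{n-1})$ a permutation of $\{2,\dots,n\}$. Items $I=\{1,\dots,m\}$, item $i$ with weight $w_i>0$, profit $\pi_i>0$, city $l_i\in\{2,\dots,n\}$; $I(c)=\{i:l_i=c\}$. Collection plan $p\in\{0,1\}^m$, $W(p)=\sum_iw_ip_i$, $P(p)=\sum_i\pi_ip_i$, knapsack constraint $W(p)\le W$. $w_p(c)=\sum_{i\in I(c)}w_ip_i$, $w_{t,p}(k)=\sum_{k'=0}^k w_p(t_{k'})$, speed $s(w)=s_{\max}-\frac wW(s_{\max}-s_{\min})$ with $s_{\max}\ge s_{\min}>0$, $\tau_{t,p}(k)=\sum_{k'=0}^{k-1}d(t_{k'},t_{k'+1})/s(w_{t,p}(k'))$, $T(t,p)=\tau_{t,p}(n)$, $N(t,p)=P(p)-R\,T(t,p)$ with $R>0$. $\mathrm{2OPT}(t,b,e)$ is the tour $t'$ with $t'_{b+k}=t_{e-k}$ for $0\le k\le e-b$ and $t'_k=t_k$ otherwise. Item profitability ratio $r_i=\pi_i/w_i$. For $1\le k\le n-1$: $L(t,p,k)=\min\{r_i:i\in I(t_k),p_i=1\}$, $H(t,p,k)=\max\{r_i:i\in I(t_k),p_i=0\}$ (with $\min\emptyset=+\infty$, $\max\emptyset=-\infty$), $L(t,p)$ and $H(t,p)$ the corresponding sequences over $k=1,\dots,n-1$.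 Prefix minimum: $\Pi(s,1)=s_1$, $\Pi(s,k)=\min(\Pi(s,k-1),s_k)$; suffix maximum: $\Omega(s,N)=s_N$, $\Omega(s,k)=\max(s_k,\Omega(s,k+1))$; $\Pi(s)$, $\Omega(s)$ denote the resulting sequences. *)

From HB Require Import structures.
From mathcomp Require Import all_boot all_order all_algebra.
From mathcomp Require Import constructive_ereal.
Set Implicit Arguments. Unset Strict Implicit. Unset Printing Implicit Defensive.
Import Order.TTheory GRing.Theory Num.Theory.
Local Open Scope ring_scope.

(* TTP instance.  Cities are 1..n, items are 1..m.                     *)
Record ttp (R : realFieldType) := TTP {
  ncity : nat;
  nitem : nat;
  dist  : nat -> nat -> R;
  wt    : nat -> R;
  prof  : nat -> R;
  loc   : nat -> nat;
  cap   : R;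
  smax  : R;
  smin  : R;
  rent  : R
}.

Section TTPDefs.
Variable R : realFieldType.
Variable I : ttp R.

Definition valid_ttp : Prop :=
  (1 < ncity I)%N /\
  (forall c c', dist I c c' = dist I c' c) /\
  (forall c c', 0 <= dist I c c') /\
  (forall i, (1 <= i <= nitem I)%N ->
      [/\ 0 < wt I i, 0 < prof I i & (2 <= loc I i <= ncity I)%N]) /\
  0 < cap I /\ 0 < smin I /\ smin I <= smax I /\ 0 < rent I.

(* cyclic tour t = <t_0,...,t_n>, represented as a function on positions *)
Definition is_tour (t : nat -> nat) : Prop :=
  [/\ t 0%N = 1%N, t (ncity I) = 1%N &
      perm_eq [seq t k | k <- iota 1 (ncity I).-1] (iota 2 (ncity I).-1)].

Definition plan := nat -> bool.

Definition items : seq nat := iota 1 (nitem I).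
Definition items_at (c : nat) : seq nat := [seq i <- items | loc I i == c].

Definition bw (p : plan) i : R := if p i then wt I i else 0.
Definition bpi (p : plan) i : R := if p i then prof I i else 0.

Definition Wtot (p : plan) : R := \sum_(i <- items) bw p i.
Definition Ptot (p : plan) : R := \sum_(i <- items) bpi p i.
Definition feasible (p : plan) : Prop := Wtot p <= cap I.

Definition is_solution (t : nat -> nat) (p : plan) : Prop :=
  is_tour t /\ feasible p.

Definition wcity (p : plan) (c : nat) : R := \sum_(i <- items_at c) bw p i.
Definition wpos (t : nat -> nat) (p : plan) (k : nat) : R :=
  \sum_(0 <= k' < k.+1) wcity p (t k').
Definition speed (w : R) : R := smax I - w / cap I * (smax I - smin I).
Definition tau (t : nat -> nat) (p : plan) (k : nat) : R :=
  \sum_(0 <= k' < k) dist I (t k') (t k'.+1) / speed (wpos t p k').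
Definition Ttime t p : R := tau t p (ncity I).
Definition Nobj t p : R := Ptot p - rent I * Ttime t p.

Definition twoopt (t : nat -> nat) (b e : nat) : nat -> nat :=
  fun k => if (b <= k <= e)%N then t (e - (k - b))%N else t k.

Definition ratio i : R := prof I i / wt I i.

Local Open Scope ereal_scope.
(* L(t,p,k) and H(t,p,k) with min(empty)=+oo, max(empty)=-oo *)
Definition Lseq (t : nat -> nat) (p : plan) (k : nat) : \bar R :=
  \big[Order.min/+oo]_(i <- items_at (t k) | p i) (ratio i)%:E.
Definition Hseq (t : nat -> nat) (p : plan) (k : nat) : \bar R :=
  \big[Order.max/-oo]_(i <- items_at (t k) | ~~ p i) (ratio i)%:E.

(* prefix minimum Pi(s,k) (s indexed from 1): Pi(s,1)=s_1,
   Pi(s,k)=min(Pi(s,k-1),s_k) *)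
Fixpoint prefmin (s : nat -> \bar R) (k : nat) : \bar R :=
  match k with
  | 0 => +oo                         (* unused: k ranges over 1..N *)
  | 1 => s 1%N
  | k'.+1 => Order.min (prefmin s k') (s k)
  end.
Fixpoint sufmax_aux (s : nat -> \bar R) (N : nat) (j : nat) : \bar R :=
  (* j = N - k *)
  match j with
  | 0 => s N
  | j'.+1 => Order.max (s (N - j)%N) (sufmax_aux s N j')
  end.
Definition sufmax (s : nat -> \bar R) (N k : nat) : \bar R :=
  sufmax_aux s N (N - k)%N.

Definition PiL t p k := prefmin (Lseq t p) k.
Definition OmH t p k := sufmax (Hseq t p) (ncity I).-1 k.
Local Close Scope ereal_scope.

Definition setb (q : plan) (i : nat) (v : bool) : plan :=
  fun j => if j == i then v else q j.

Definition phase1_spec (t : nat -> nat) (p : plan) (b e : nat) : plan :=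
  let t' := twoopt t b e in
  foldl (fun q k =>
     foldl (fun q i =>
        if p i && ((ratio i)%:E < PiL t p k)%E then setb q i false else q)
       q (items_at (t' k)))
    p (iota b (e - b).+1).

Definition phase2_spec (t : nat -> nat) (p : plan) (b e : nat) (q0 : plan)
  : plan :=
  let t' := twoopt t b e in
  foldl (fun q k =>
     foldl (fun q i =>
        if ~~ q i && ((ratio i)%:E > OmH t p k)%E
           && (Wtot (setb q i true) <= cap I)
        then setb q i true else q)
       q (items_at (t' k)))
    q0 (rev (iota b (e - b).+1)).

Definition pprime (t : nat -> nat) (p : plan) (b e : nat) : plan :=
  phase2_spec t p b e (phase1_spec t p b e).

Definition nitems_seg (t : nat -> nat) (b e : nat) : nat :=
  size [seq i <- items |
          loc I i \in [seq twoopt t b e k | k <- iota b (e - b).+1]].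

(* The algorithm below works on the following data, each
   entry of which is accessible at unit cost: the instance arrays
   (dist, wt, prof, loc), the item lists I(c), the arrays t and p, and
   the precomputed data  PiLa k = Pi(L(t,p),k),  OmHa k = Omega(H(t,p),k),
   Wp = W(p),  wa k = w_{t,p}(k),  taua k = tau_{t,p}(k), and also
   Pp = P(p).  Every elementary step (one iteration of a
   loop, with O(1) arithmetic/comparisons/array accesses) costs one tick;
   the returned nat is the total number of ticks.                       *)

Record st := ST { cq : plan; cW : R; cP : R; ccost : nat }.

Definition alg_phase1 (t : nat -> nat) (b e : nat) (PiLa : nat -> \bar R)
  (s0 : st) : st :=
  let t' := twoopt t b e in
  foldl (fun s k =>
     foldl (fun s i =>
        if cq s i && ((ratio i)%:E < PiLa k)%E
        then ST (setb (cq s) i false) (cW s - wt I i) (cP s - prof I i)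
                (ccost s).+1
        else ST (cq s) (cW s) (cP s) (ccost s).+1)
       (ST (cq s) (cW s) (cP s) (ccost s).+1) (items_at (t' k)))
    s0 (iota b (e - b).+1).

Definition alg_phase2 (t : nat -> nat) (b e : nat) (OmHa : nat -> \bar R)
  (s0 : st) : st :=
  let t' := twoopt t b e in
  foldl (fun s k =>
     foldl (fun s i =>
        if ~~ cq s i && ((ratio i)%:E > OmHa k)%E && (cW s + wt I i <= cap I)
        then ST (setb (cq s) i true) (cW s + wt I i) (cP s + prof I i)
                (ccost s).+1
        else ST (cq s) (cW s) (cP s) (ccost s).+1)
       (ST (cq s) (cW s) (cP s) (ccost s).+1) (items_at (t' k)))
    s0 (rev (iota b (e - b).+1)).

(* Evaluation of N(t',p'): positions < b are unchanged, so start from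
   w_{t,p}(b-1) and tau_{t,p}(b-1), then walk along t' from b-1 to n. *)
Record st3 := ST3 { cw : R; ctime : R; ccost3 : nat }.

Definition alg_eval (t : nat -> nat) (b e : nat) (q : plan) (Wp Wq : R)
  (wa taua : nat -> R) : R * nat :=
  let t' := twoopt t b e in
  let s0 := ST3 (wa b.-1) (taua b.-1) 2 in
  let s := foldl (fun s k =>
      let time := ctime s + dist I (t' k) (t' k.+1) / speed (cw s) in
      if (k.+1 <= e)%N then
        foldl (fun s i => ST3 (cw s + bw q i) (ctime s) (ccost3 s).+1)
          (ST3 (cw s) time (ccost3 s).+1) (items_at (t' k.+1))
      else ST3 (wa k.+1 + (Wq - Wp)) time (ccost3 s).+1)
    s0 (iota b.-1 (ncity I - b.-1)) in
  (ctime s, ccost3 s).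

Definition algorithm (t : nat -> nat) (p : plan) (b e : nat)
  (PiLa OmHa : nat -> \bar R) (Wp Pp : R) (wa taua : nat -> R)
  : plan * R * nat :=
  let s1 := alg_phase1 t b e PiLa (ST p Wp Pp 0) in
  let s2 := alg_phase2 t b e OmHa s1 in
  let (T', c3) := alg_eval t b e (cq s2) Wp (cW s2) wa taua in
  (cq s2, cP s2 - rent I * T', (ccost s2 + c3)%N).

End TTPDefs.

(* Both phases only touch items located at the cities of the reversed segment
   t'[b,e], so the algorithm keeps W and P up to date at one step per item, and
   p' differs from p only at those items.  As t'[b,e] visits the same cities as
   t[b,e], the cumulative weight w_{t',p'}(k) equals w_{t,p}(k) for k < b and
   w_{t,p}(k) + W(p') - W(p) for k >= e.  Hence the travel time can be resumed
   from the stored tau_{t,p}(b-1), and items need to be scanned only inside the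
   segment: each of the O(n - b) positions and each item of t'[b,e] costs O(1). *)

From HB Require Import structures.
From mathcomp Require Import all_boot all_order all_algebra.
From mathcomp Require Import constructive_ereal.
From Stdlib Require Import FunctionalExtensionality.
From mathcomp Require Import zify lra.
Set Implicit Arguments. Unset Strict Implicit. Unset Printing Implicit Defensive.
Import Order.TTheory GRing.Theory Num.Theory.
Local Open Scope ring_scope.

Section FoldInvariants.
Variables (T : eqType) (A B : Type).

Lemma foldl_ind (P : A -> Prop) (f : A -> T -> A) (s : seq T) (a : A) :
  (forall x a, x \in s -> P a -> P (f a x)) -> P a -> P (foldl f a s).
Proof.
elim: s a => [//|x s IH] a /= fP Pa; apply: IH => [y a' ys|]; apply: fP => //.
  by rewrite in_cons ys orbT.
exact: mem_head.
Qed.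

Lemma foldl_rel (P : A -> B -> Prop) (f : A -> T -> A) (g : B -> T -> B)
    (s : seq T) (a : A) (b : B) :
  (forall x a b, x \in s -> P a b -> P (f a x) (g b x)) ->
  P a b -> P (foldl f a s) (foldl g b s).
Proof.
elim: s a b => [//|x s IH] a b /= fgP Pab; apply: IH => [y a' b' ys|]; apply: fgP => //.
  by rewrite in_cons ys orbT.
exact: mem_head.
Qed.

Lemma foldl_count (c : A -> nat) (w : T -> nat) (f : A -> T -> A) (s : seq T) (a : A) :
  (forall a x, c (f a x) = c a + w x)%N ->
  c (foldl f a s) = (c a + \sum_(x <- s) w x)%N.
Proof.
move=> cf; elim: s a => [|x s IH] a /=; first by rewrite big_nil addn0.
by rewrite IH cf big_cons addnA.
Qed.

End FoldInvariants.

Lemma sumnS (T : Type) (s : seq T) (f : T -> nat) :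
  (\sum_(x <- s) (f x).+1 = size s + \sum_(x <- s) f x)%N.
Proof. by rewrite -sum1_size -big_split. Qed.

Lemma map_uniq_inj_in (T1 T2 : eqType) (f : T1 -> T2) (s : seq T1) :
  uniq (map f s) -> {in s &, injective f}.
Proof.
elim: s => [//|a s IH] /= /andP[fa_s Us] x y.
rewrite !in_cons => /orP[/eqP->|xs] /orP[/eqP->|ys] // fxy.
- by case/negP: fa_s; rewrite fxy map_f.
- by case/negP: fa_s; rewrite -fxy map_f.
- exact: IH.
Qed.

Lemma big_loc_mem (V : Type) (idx : V) (op : Monoid.com_law idx)
    (loc : nat -> nat) (s L : seq nat) (F : nat -> V) :
  uniq L ->
  \big[op/idx]_(c <- L) \big[op/idx]_(i <- s | loc i == c) F i =
  \big[op/idx]_(i <- s | loc i \in L) F i.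
Proof.
elim: L => [_|c L IH /= /andP[cL UL]].
  by rewrite big_nil big_pred0 // => i; rewrite in_nil.
rewrite big_cons IH // (bigID (fun i => loc i == c) (fun i => loc i \in c :: L)) /=.
congr (op _ _); apply: eq_bigl => i; rewrite in_cons.
  by case: (loc i == c); rewrite ?andbF ?andbT.
by case: eqP => [->|_]; rewrite ?(negbTE cL) ?andbT.
Qed.

Section Plans.
Variables (R : realFieldType) (I : ttp R).

Lemma setb_id (q : plan) i v : q i = v -> setb q i v = q.
Proof.
by move=> qi; apply: functional_extensionality => j; rewrite /setb; case: eqP => // ->.
Qed.

Lemma setb_other (q : plan) i v j : j != i -> setb q i v j = q j.
Proof. by rewrite /setb => /negbTE ->. Qed.

Lemma big_items_setb (F : nat -> bool -> R) (q : plan) i v :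
  i \in items I ->
  \sum_(j <- items I) F j (setb q i v j) =
  \sum_(j <- items I) F j (q j) - F i (q i) + F i v.
Proof.
move=> Ii; have Uitems : uniq (items I) by exact: iota_uniq.
rewrite !(bigD1_seq i Ii Uitems) /= /setb eqxx.
rewrite (eq_bigr (fun j => F j (q j))) => [|j /negbTE -> //].
by rewrite [F i (q i) + _]addrC addrK addrC.
Qed.

Lemma Wtot_setb (q : plan) i v : i \in items I ->
  Wtot I (setb q i v) = Wtot I q - bw I q i + (if v then wt I i else 0).
Proof. exact: (big_items_setb (fun j (b : bool) => if b then wt I j else 0)). Qed.

Lemma Ptot_setb (q : plan) i v : i \in items I ->
  Ptot I (setb q i v) = Ptot I q - bpi I q i + (if v then prof I i else 0).
Proof. exact: (big_items_setb (fun j (b : bool) => if b then prof I j else 0)). Qed.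

Lemma items_atP c i : i \in items_at I c -> i \in items I /\ loc I i = c.
Proof. by rewrite mem_filter => /andP[/eqP]. Qed.

Section Tour.
Variable t : nat -> nat.
Hypothesis tour_t : is_tour I t.

Lemma tour_inner_range j : (1 <= j <= (ncity I).-1)%N -> (2 <= t j <= ncity I)%N.
Proof.
case: tour_t => _ _ perm_t Hj.
have : t j \in iota 2 (ncity I).-1.
  by rewrite -(perm_mem perm_t) map_f // mem_iota; lia.
rewrite mem_iota; lia.
Qed.

Lemma tour_inner_inj : {in [pred j | 1 <= j <= (ncity I).-1]%N &, injective t}.
Proof.
case: tour_t => _ _ perm_t j1 j2 /[!inE] H1 H2.
by apply: (map_uniq_inj_in (s := iota 1 (ncity I).-1));
  rewrite ?(perm_uniq perm_t) ?iota_uniq ?mem_iota //; lia.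
Qed.

End Tour.
End Plans.

Section Phases.
Variables (R : realFieldType) (I : ttp R).
Variables (t : nat -> nat) (p : plan) (b e : nat).

Definition seg_cities : seq nat := [seq twoopt t b e k | k <- iota b (e - b).+1].

Definition represents (s : st R) (q : plan) : Prop :=
  [/\ cq s = q, cW s = Wtot I q & cP s = Ptot I q].

Lemma represents_tick s q : represents s q ->
  represents (ST (cq s) (cW s) (cP s) (ccost s).+1) q.
Proof. by case. Qed.

Lemma alg_phase1_represents PiLa s0 :
  {in iota b (e - b).+1, PiLa =1 PiL I t p} -> represents s0 p ->
  represents (alg_phase1 I t b e PiLa s0) (phase1_spec I t p b e).
Proof.
move=> PiLaE s0p.
(* The algorithm tests its current plan where the specification tests [p];
   the two agree because phase 1 only ever drops items. *)
pose Inv s q := represents s q /\ forall j, q j -> p j.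
suff [] : Inv (alg_phase1 I t b e PiLa s0) (phase1_spec I t p b e) by [].
apply: (foldl_rel (P := Inv)) => [k s q /PiLaE PiLak [sq qp]|//].
apply: (foldl_rel (P := Inv)) => [i s' q' /items_atP[Ii _] [[-> sW sP] q'p]|]; last first.
  by split => //; apply: represents_tick.
rewrite -PiLak; case qi: (q' i).
- rewrite (q'p _ qi) /=; case: ifP => _; last by [].
  split=> [|j]; last by rewrite /setb; case: eqP => // _ /q'p.
  by split; rewrite /= ?Wtot_setb ?Ptot_setb // /bw /bpi qi ?sW ?sP addr0.
- by case: ifP => _ /=; rewrite ?setb_id.
Qed.

Lemma alg_phase2_represents OmHa s0 q0 :
  {in iota b (e - b).+1, OmHa =1 OmH I t p} -> represents s0 q0 ->
  represents (alg_phase2 I t b e OmHa s0) (phase2_spec I t p b e q0).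
Proof.
move=> OmHaE s0q0; apply: foldl_rel => [k s q|//].
rewrite mem_rev => /OmHaE OmHak sq.
apply: foldl_rel => [i s' q' /items_atP[Ii _] [-> sW sP]|]; last exact: represents_tick.
rewrite -OmHak; case qi: (q' i) => /=; first by [].
have Wset : Wtot I (setb q' i true) = Wtot I q' + wt I i.
  by rewrite Wtot_setb // /bw qi subr0.
rewrite Wset -sW; case: ifP => _; last by [].
by split; rewrite //= ?Wset ?sW // Ptot_setb // /bpi qi sP subr0.
Qed.

Lemma pprime_local j : pprime I t p b e j != p j -> loc I j \in seg_cities.
Proof.
pose local (q : plan) := forall j, q j != p j -> loc I j \in seg_cities.
have local_setb q k i v : k \in iota b (e - b).+1 -> i \in items_at I (twoopt t b e k) ->
    local q -> local (setb q i v).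
  move=> kbe /items_atP[_ li] lq j'; have [-> _|ne] := eqVneq j' i; first by rewrite li map_f.
  by rewrite setb_other //; apply: lq.
suff : local (pprime I t p b e) by apply.
apply: (foldl_ind (P := local)) => [k q|].
  rewrite mem_rev => kbe lq; apply: (foldl_ind (P := local)) => // i {}q Ii {}lq.
  by case: ifP => // _; exact: local_setb Ii lq.
apply: (foldl_ind (P := local)) => [k q kbe lq|j']; last by rewrite eqxx.
apply: (foldl_ind (P := local)) => // i {}q Ii {}lq.
by case: ifP => // _; exact: local_setb Ii lq.
Qed.

Lemma alg_phase1_cost PiLa s0 :
  ccost (alg_phase1 I t b e PiLa s0) =
  (ccost s0 + (e - b).+1 + \sum_(k <- iota b (e - b).+1) size (items_at I (twoopt t b e k)))%N.
Proof.
rewrite (foldl_count (w := fun k => (size (items_at I (twoopt t b e k))).+1)).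
  by rewrite sumnS size_iota addnA.
move=> s k /=; rewrite (foldl_count (w := fun=> 1%N)) => [|s' i].
  by rewrite sum1_size /= addSnnS.
by case: ifP => _; rewrite addn1.
Qed.

Lemma alg_phase2_cost OmHa s0 :
  ccost (alg_phase2 I t b e OmHa s0) =
  (ccost s0 + (e - b).+1 + \sum_(k <- iota b (e - b).+1) size (items_at I (twoopt t b e k)))%N.
Proof.
rewrite (foldl_count (w := fun k => (size (items_at I (twoopt t b e k))).+1)).
  by rewrite big_rev sumnS size_iota addnA.
move=> s k /=; rewrite (foldl_count (w := fun=> 1%N)) => [|s' i].
  by rewrite sum1_size /= addSnnS.
by case: ifP => _; rewrite addn1.
Qed.

End Phases.

Section Segment.
Variables (R : realFieldType) (I : ttp R) (t : nat -> nat) (b e : nat).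

Local Notation t' := (twoopt t b e).
Local Notation S := (seg_cities t b e).

Lemma twoopt_in k : (b <= k <= e)%N -> t' k = t (e - (k - b))%N.
Proof. by rewrite /twoopt => ->. Qed.

Lemma twoopt_out k : ~~ (b <= k <= e)%N -> t' k = t k.
Proof. by rewrite /twoopt => /negbTE ->. Qed.

Lemma big_seg_twoopt (V : nmodType) (F : nat -> V) :
  \sum_(b <= k < e.+1) F (t' k) = \sum_(b <= k < e.+1) F (t k).
Proof.
rewrite big_nat_rev; apply: eq_big_nat => k kbe.
by rewrite twoopt_in; [congr (F (t _)) | ]; lia.
Qed.

Hypotheses (tour_t : is_tour I t) (b_gt0 : (0 < b)%N) (b_le_e : (b <= e)%N)
  (e_lt_n : (e < ncity I)%N).

Lemma tour_notin_seg_cities j :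
  (j <= ncity I)%N -> ~~ (b <= j <= e)%N -> t j \notin S.
Proof.
move=> jn jbe; apply/mapP => -[k]; rewrite mem_iota => kbe.
rewrite twoopt_in; last lia.
set k' := (e - (k - b))%N; have k'_inner : (1 <= k' <= (ncity I).-1)%N by lia.
have [j_inner | j_end] := boolP (1 <= j <= (ncity I).-1)%N.
  by move/(tour_inner_inj tour_t); rewrite !inE => /(_ j_inner k'_inner); lia.
have -> : t j = 1%N by case: tour_t => t0 tn _; have [->|->] : j = 0%N \/ j = ncity I by lia.
by have := tour_inner_range tour_t k'_inner; lia.
Qed.

Lemma uniq_seg_cities : uniq S.
Proof.
rewrite map_inj_in_uniq ?iota_uniq // => k1 k2; rewrite !mem_iota => k1be k2be.
rewrite !twoopt_in; try lia.
by move/(tour_inner_inj tour_t); rewrite !inE => /(_ _ _); lia.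
Qed.

Lemma big_seg_cities (V : nmodType) (F : nat -> V) :
  \sum_(b <= k < e.+1) \sum_(i <- items_at I (t' k)) F i =
  \sum_(i <- items I | loc I i \in S) F i.
Proof.
rewrite -(big_loc_mem _ _ _ _ uniq_seg_cities) big_map /index_iota subSn //.
by apply: eq_bigr => k _; rewrite big_filter.
Qed.


Lemma nitems_seg_sum :
  nitems_seg I t b e = (\sum_(k <- iota b (e - b).+1) size (items_at I (t' k)))%N.
Proof.
rewrite /nitems_seg size_filter -sum1_count -(big_loc_mem _ _ _ _ uniq_seg_cities) big_map.
by apply: eq_bigr => k _; rewrite sum1_count size_filter.
Qed.

Variables p q : plan.
Hypothesis q_local : forall j, q j != p j -> loc I j \in S.

Lemma wcity_outside j :
  (j <= ncity I)%N -> ~~ (b <= j <= e)%N -> wcity I q (t j) = wcity I p (t j).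
Proof.
move=> jn jbe; apply: eq_big_seq => i /items_atP[_ li]; rewrite /bw.
have [->//|/q_local] := eqVneq (q i) (p i).
by rewrite li (negbTE (tour_notin_seg_cities jn jbe)).
Qed.

Lemma wpos_twoopt_prefix m : (m < b)%N -> wpos I t' q m = wpos I t p m.
Proof.
move=> mb; apply: eq_big_nat => k km.
by rewrite twoopt_out ?wcity_outside //; lia.
Qed.

Lemma tau_twoopt_prefix m : (m < b)%N -> tau I t' q m = tau I t p m.
Proof.
move=> mb; apply: eq_big_nat => k km.
by rewrite wpos_twoopt_prefix ?twoopt_out //; lia.
Qed.

Lemma Wtot_local_diff :
  Wtot I q - Wtot I p = \sum_(i <- items I | loc I i \in S) bw I q i
                      - \sum_(i <- items I | loc I i \in S) bw I p i.
Proof.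
have splitW (r : plan) : Wtot I r =
    \sum_(i <- items I | loc I i \in S) bw I r i +
    \sum_(i <- items I | loc I i \notin S) bw I r i by exact: bigID.
rewrite !splitW [X in _ - (_ + X)](eq_bigr (bw I q)) => [|i /negbTE]; first lra.
by rewrite /bw; have [->|/q_local->] := eqVneq (q i) (p i).
Qed.

Lemma wpos_twoopt_suffix k :
  (e <= k <= ncity I)%N -> wpos I t' q k = wpos I t p k + (Wtot I q - Wtot I p).
Proof.
move=> ek.
have split3 (F : nat -> R) : \sum_(0 <= i < k.+1) F i =
    \sum_(0 <= i < b) F i + \sum_(b <= i < e.+1) F i + \sum_(e.+1 <= i < k.+1) F i.
  by rewrite -!big_cat_nat //; lia.
have outside (l r : nat) : (r <= (ncity I).+1)%N -> (r <= b)%N || (e < l)%N ->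
    \sum_(l <= i < r) wcity I q (t' i) = \sum_(l <= i < r) wcity I p (t i).
  by move=> rn lr; apply: eq_big_nat => i ilr; rewrite twoopt_out ?wcity_outside //; lia.
rewrite /wpos !split3 (outside 0%N b) ?(outside e.+1 k.+1) ?ltnSn ?orbT //; try lia.
rewrite Wtot_local_diff -(@big_seg_twoopt _ (wcity I p)) /wcity.
rewrite !big_seg_cities; lra.
Qed.

End Segment.

Section Evaluation.
Variables (R : realFieldType) (I : ttp R) (t : nat -> nat) (b e : nat) (q : plan).

Local Notation t' := (twoopt t b e).

Lemma eval_scan (s : st3 R) l :
  foldl (fun s i => ST3 (cw s + bw I q i) (ctime s) (ccost3 s).+1) s l =
  ST3 (cw s + \sum_(i <- l) bw I q i) (ctime s) (ccost3 s + size l).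
Proof.
elim: l s => [|i l IH] s /=; first by rewrite big_nil addr0 addn0; case: s.
by rewrite IH /= big_cons addrA addSnnS.
Qed.

Lemma alg_eval_time Wp Wq wa taua :
  (b <= ncity I)%N ->
  wa b.-1 = wpos I t' q b.-1 -> taua b.-1 = tau I t' q b.-1 ->
  (forall k, (e <= k < ncity I)%N -> wa k.+1 + (Wq - Wp) = wpos I t' q k.+1) ->
  (alg_eval I t b e q Wp Wq wa taua).1 = Ttime I t' q.
Proof.
move=> bn wa_b taua_b wa_suffix; rewrite /alg_eval /=.
set F := (X in foldl X).
have loop m a s : (a + m <= ncity I)%N ->
    cw s = wpos I t' q a -> ctime s = tau I t' q a ->
    cw (foldl F s (iota a m)) = wpos I t' q (a + m) /\
    ctime (foldl F s (iota a m)) = tau I t' q (a + m).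
  elim: m a s => [|m IH] a s am ws ts /=; first by rewrite addn0.
  rewrite -addSnnS; apply: IH; first lia.
  - rewrite /F; case: ifP => ea; rewrite ?eval_scan /= ?ws; last by apply: wa_suffix; lia.
    by rewrite /wpos [in RHS]big_nat_recr.
  - by rewrite /F; case: ifP => _; rewrite ?eval_scan /= ts ws /tau [in RHS]big_nat_recr.
have n_split : (b.-1 + (ncity I - b.-1) = ncity I)%N by lia.
have [_] := loop _ _ (ST3 (wa b.-1) (taua b.-1) 2) (eq_leq n_split) wa_b taua_b.
by rewrite n_split.
Qed.

Lemma alg_eval_cost Wp Wq wa taua :
  (0 < b)%N -> (b <= e)%N -> (e <= ncity I)%N ->
  (alg_eval I t b e q Wp Wq wa taua).2 =
  (ncity I - b.-1 + 2 + \sum_(k <- iota b (e - b).+1) size (items_at I (t' k)))%N.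
Proof.
move=> b_gt0 be en; rewrite /alg_eval [LHS]/=.
set F := (X in foldl X).
rewrite (foldl_count (w := fun k => if (k.+1 <= e)%N then (size (items_at I (t' k.+1))).+1
                                     else 1%N)) => [|s k]; last first.
  by rewrite /F; case: ifP => _; rewrite ?eval_scan /= ?addn1 ?addSnnS.
have -> : (ncity I - b.-1 = (e - b).+1 + (ncity I - e))%N by lia.
rewrite iotaD big_cat.
rewrite (eq_big_seq (fun k => (size (items_at I (t' k.+1))).+1)) => [|k]; last first.
  by rewrite mem_iota => kbe; case: ifP => //; lia.
rewrite [X in (_ + (_ + X))%N](eq_big_seq (fun=> 1%N)) => [|k]; last first.
  by rewrite mem_iota => kbe; case: ifP => //; lia.
have shift : iota b (e - b).+1 = map succn (iota b.-1 (e - b).+1).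
  by rewrite -{1}(prednK b_gt0) -add1n iotaDl.
rewrite sumnS sum1_size !size_iota shift big_map [ccost3 _]/=.
set X := (\sum_(_ <- _) _)%N; lia.
Qed.

End Evaluation.

Theorem mainTheorem11 :
  exists C : nat,
  forall (R : realFieldType) (I : ttp R) (t : nat -> nat) (p : plan) (b e : nat)
    (PiLa OmHa : nat -> \bar R) (Wp Pp : R) (wa taua : nat -> R),
    valid_ttp I ->
    is_solution I t p ->
    (0 < b)%N -> (b < e)%N -> (e < ncity I)%N ->
    (forall k, (1 <= k <= (ncity I).-1)%N -> PiLa k = PiL I t p k) ->
    (forall k, (1 <= k <= (ncity I).-1)%N -> OmHa k = OmH I t p k) ->
    Wp = Wtot I p ->
    Pp = Ptot I p ->
    (forall k, (k <= ncity I)%N -> wa k = wpos I t p k) ->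
    (forall k, (k <= ncity I)%N -> taua k = tau I t p k) ->
    let '(q, Nval, cost) := algorithm I t p b e PiLa OmHa Wp Pp wa taua in
    (forall i, q i = pprime I t p b e i) /\
    Nval = Nobj I (twoopt t b e) (pprime I t p b e) /\
    (cost <= C * (ncity I - b + nitems_seg I t b e))%N.
Proof.
exists 6%N => R I t p b e PiLa OmHa Wp Pp wa taua _ [tour_t _] b_gt0 b_lt_e e_lt_n
  PiLaE OmHaE WpE PpE waE tauaE.
have b_le_e := ltnW b_lt_e.
have inner k : k \in iota b (e - b).+1 -> (1 <= k <= (ncity I).-1)%N by rewrite mem_iota; lia.
have s0p : represents I (ST p Wp Pp 0) p by split.
have [q_eq qW qP] := alg_phase2_represents (fun k kbe => OmHaE k (inner k kbe))
  (alg_phase1_represents (fun k kbe => PiLaE k (inner k kbe)) s0p).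
have q_local := @pprime_local R I t p b e.
rewrite /algorithm; cbv zeta; rewrite q_eq qW qP.
case E: (alg_eval _ _ _ _ _ _ _ _ _) => [T' c3]; rewrite -/(pprime I t p b e).
have T'E : T' = Ttime I (twoopt t b e) (pprime I t p b e).
  have -> : T' = (T', c3).1 by []; rewrite -E; apply: alg_eval_time; try lia.
  - by rewrite waE ?(wpos_twoopt_prefix tour_t b_gt0 b_le_e e_lt_n q_local) //; lia.
  - by rewrite tauaE ?(tau_twoopt_prefix tour_t b_gt0 b_le_e e_lt_n q_local) //; lia.
  - move=> k ek.
    by rewrite waE ?(wpos_twoopt_suffix tour_t b_gt0 b_le_e e_lt_n q_local) ?WpE //; lia.
split=> //; split; first by rewrite T'E.
have -> : c3 = (T', c3).2 by [].
rewrite -E alg_eval_cost ?alg_phase2_cost ?alg_phase1_cost //; try lia.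
rewrite (nitems_seg_sum tour_t) // /=; set X := (\sum_(_ <- _) _)%N; lia.
Qed.
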